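(* Assume (A1)–(A3), $\alpha>1$, $\mu>0$, $LR_{target}>0$, and $\rho<\ln(10)\,LR_{target}\,\mu$, with $c_{opt},\rho,T_{bc,opt},AUC_{bc,opt}$ as defined below, and let $T_{opt}=\frac{\ln(10)LR_{target}}{k(c_{opt})-r}$, $AUC_{opt}=T_{opt}c_{opt}$, $\tau=\ln(2)/\mu$. Then $$T_{opt}-T_{bc,opt}=\frac{\tau}{\ln 2}\cdot\frac{\rho}{k(c_{opt})-r},\qquad 0<T_{opt}-T_{bc,opt}\le\frac{\tau}{\ln 2}\left(1-\frac{zMIC}{c_{opt}}\right),$$ and $$AUC_{bc,opt}-AUC_{opt}=\frac{\tau}{\ln 2}\left(1-\frac{\rho}{k(c_{opt})-r}\right)c_{opt}\ \ge\ \frac{\tau}{\ln 2}\,zMIC.$$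
   Context: Let $r>0$ and let $k:[0,\infty)\to[0,\infty)$ satisfy: (A1) $k(0)=0$, $k$ is continuous and strictly increasing on $[0,\infty)$, and twice differentiable on $(0,\infty)$; (A2) $\lim_{c\to\infty}k(c)=k_{max}<\infty$; (A3) either (i) (concave case) $k''(c)<0$ for all $c>0$, or (ii) (sigmoidal case) there is $c_{infl}>0$ with $k''(c)>0$ for $0<c<c_{infl}$ and $k''(c)<0$ for $c>c_{infl}$. Set $\alpha=k_{max}/r$; $zMIC$ is the unique $c>0$ with $k(c)=r$; $c_{opt}$ is the unique solution in $(0,\infty)$ of $k'(c)=\frac{k(c)-r}{c}$ (the maximizer of $(k(c)-r)/c$); $\rho=\int_{zMIC}^{c_{opt}}\frac{k(u)-r}{u}du$; $T_{bc,opt}=\frac{\ln(10)LR_{target}-\mu^{-1}\rho}{k(c_{opt})-r}$; $AUC_{bc,opt}=\left[\mu^{-1}+T_{bc,opt}\right]c_{opt}$. *)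

From Stdlib Require Import Reals.
From Coquelicot Require Import Coquelicot.
Open Scope R_scope.

Definition assumption_A1 (k : R -> R) : Prop :=
  k 0 = 0 /\
  (forall c, 0 <= c -> 0 <= k c) /\
  (forall c, 0 <= c ->
     filterlim k (within (fun x => 0 <= x) (locally c)) (locally (k c))) /\
  (forall x y, 0 <= x -> x < y -> k x < k y) /\
  (forall c, 0 < c -> ex_derive k c /\ ex_derive (Derive k) c).

Definition assumption_A2 (k : R -> R) (kmax : R) : Prop :=
  is_lim k p_infty kmax.

Definition assumption_A3 (k : R -> R) : Prop :=
  (forall c, 0 < c -> Derive (Derive k) c < 0) \/
  (exists c_infl, 0 < c_infl /\
     (forall c, 0 < c < c_infl -> 0 < Derive (Derive k) c) /\
     (forall c, c_infl < c -> Derive (Derive k) c < 0)).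

Definition rho (k : R -> R) (r zMIC c_opt : R) : R :=
  RInt (fun u => (k u - r) / u) zMIC c_opt.

Definition T_bc_opt (k : R -> R) (r zMIC c_opt mu LR : R) : R :=
  (ln 10 * LR - / mu * rho k r zMIC c_opt) / (k c_opt - r).

Definition AUC_bc_opt (k : R -> R) (r zMIC c_opt mu LR : R) : R :=
  (/ mu + T_bc_opt k r zMIC c_opt mu LR) * c_opt.

Definition T_opt (k : R -> R) (r c_opt LR : R) : R :=
  ln 10 * LR / (k c_opt - r).

Definition AUC_opt (k : R -> R) (r c_opt LR : R) : R :=
  T_opt k r c_opt LR * c_opt.

Definition tau (mu : R) : R := ln 2 / mu.

From Stdlib Require Import Reals Lra.
From Coquelicot Require Import Coquelicot.
Open Scope R_scope.

(* Write g(u) = (k(u) - r)/u for the net killing rate per unit of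
   concentration; rho is the integral of g over [zMIC, c_opt].  Because k is
   strictly increasing with k(zMIC) = r, g vanishes at zMIC and is positive
   beyond it; because k is bounded (A2), g tends to 0 at infinity.  Hence on a
   large enough interval [zMIC, M] the continuous function g attains its
   maximum at an interior point, which is a critical point of g, i.e. a
   solution of k'(c) = (k(c) - r)/c; by uniqueness it is c_opt.  So g is
   positive on (zMIC, c_opt] and bounded by g(c_opt) = (k(c_opt) - r)/c_opt
   there, which gives 0 < rho <= (c_opt - zMIC)(k(c_opt) - r)/c_opt.
   The theorem then follows from the explicit formulas
   T_opt - T_bc = rho/(mu (k(c_opt) - r)) and
   AUC_bc - AUC_opt = (1/mu - (T_opt - T_bc)) c_opt, with tau/ln 2 = 1/mu.
   The file first studies g (derivative, continuity, sign, behaviour at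
   infinity, location of its maximum), then bounds rho, then does the algebra. *)

Definition efficiency (k : R -> R) (r u : R) : R := (k u - r) / u.

Lemma RInt_le_const (f : R -> R) (a b m : R) :
  a <= b -> (forall x, a <= x <= b -> continuous f x) ->
  (forall x, a <= x <= b -> f x <= m) -> RInt f a b <= (b - a) * m.
Proof.
intros Hab Hcont Hbound.
replace ((b - a) * m) with (RInt (fun _ => m) a b) by (rewrite RInt_const; reflexivity).
apply RInt_le; [exact Hab | | apply ex_RInt_const | intros x Hx; apply Hbound; lra].
apply (ex_RInt_continuous (V := R_CompleteNormedModule)).
intros x Hx; rewrite Rmin_left, Rmax_right in Hx by exact Hab; apply Hcont, Hx.
Qed.

Section Efficiency.

Variables (k : R -> R) (r : R).

Lemma is_derive_efficiency (c : R) :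
  0 < c -> ex_derive k c ->
  is_derive (efficiency k r) c ((Derive k c * c - (k c - r)) / (c * c)).
Proof.
intros Hc Hk; unfold efficiency.
auto_derive; [split; [exact Hk | split; [lra | exact I]] |].
change (fun x => k x) with k; field; lra.
Qed.

Lemma continuous_efficiency (c : R) :
  0 < c -> ex_derive k c -> continuous (efficiency k r) c.
Proof.
intros Hc Hk.
apply (ex_derive_continuous (K := R_AbsRing) (V := R_NormedModule)).
eexists; exact (is_derive_efficiency c Hc Hk).
Qed.

(* Fermat's rule for g: an interior maximum c of g on (a, b), 0 < a, solves
   the defining equation k'(c) = (k(c) - r)/c of c_opt. *)
Lemma efficiency_interior_max_critical (a b c : R) :
  0 < a -> a < c -> c < b -> ex_derive k c ->
  (forall x, a < x < b -> efficiency k r x <= efficiency k r c) ->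
  Derive k c = (k c - r) / c.
Proof.
intros Ha Hac Hcb Hk Hmax.
assert (Hc : 0 < c) by lra.
pose proof (is_derive_efficiency c Hc Hk) as Hd.
apply is_derive_Reals in Hd.
assert (pr : derivable_pt (efficiency k r) c) by (eexists; exact Hd).
pose proof (deriv_maximum _ a b c pr Hac Hcb (fun x h1 h2 => Hmax x (conj h1 h2)))
  as Hzero.
rewrite (derive_pt_eq_0 _ _ _ pr Hd) in Hzero.
assert (Hnum : Derive k c * c - (k c - r) = 0).
{ apply (Rmult_eq_reg_r (/ (c * c))); [lra |].
  apply Rinv_neq_0_compat; nra. }
field_simplify_eq; lra.
Qed.

Lemma efficiency_pos (z u : R) :
  (forall x y, 0 <= x -> x < y -> k x < k y) ->
  0 <= z -> k z = r -> z < u -> 0 < efficiency k r u.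
Proof.
intros Hmono Hz Hkz Hzu.
assert (k z < k u) by (apply Hmono; lra).
apply Rdiv_lt_0_compat; lra.
Qed.

Lemma efficiency_lim_infty (kmax : R) :
  is_lim k p_infty kmax -> is_lim (efficiency k r) p_infty 0.
Proof.
intros Hlim.
replace (Finite 0) with (Rbar_div (kmax - r) p_infty) by (simpl; f_equal; ring).
apply (is_lim_div (fun u => k u - r) (fun u => u)).
- apply (is_lim_minus _ _ _ kmax r); [exact Hlim | apply is_lim_const |].
  reflexivity.
- apply is_lim_id.
- discriminate.
- exact I.
Qed.

Lemma efficiency_eventually_below (kmax v N : R) :
  is_lim k p_infty kmax -> 0 < v ->
  exists M, N < M /\ efficiency k r M < v.
Proof.
intros Hlim Hv.
pose proof (proj2 (is_lim_spec _ _ _) (efficiency_lim_infty kmax Hlim)) as Hg.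
destruct (Hg (mkposreal v Hv)) as [M0 HM0].
exists (Rmax M0 N + 1); split; [pose proof (Rmax_r M0 N); lra |].
assert (Hfar : M0 < Rmax M0 N + 1) by (pose proof (Rmax_l M0 N); lra).
specialize (HM0 _ Hfar); simpl in HM0.
apply Rabs_def2 in HM0; lra.
Qed.

(* The relevant consequences of (A1), (A2) and of the definitions of zMIC
   and c_opt. *)
Section Optimum.

Variables (kmax zMIC c_opt : R).
Hypothesis k_incr : forall x y, 0 <= x -> x < y -> k x < k y.
Hypothesis k_diff : forall c, 0 < c -> ex_derive k c.
Hypothesis k_lim : is_lim k p_infty kmax.
Hypothesis zMIC_pos : 0 < zMIC.
Hypothesis k_zMIC : k zMIC = r.
Hypothesis c_opt_uniq : forall c, 0 < c -> Derive k c = (k c - r) / c -> c = c_opt.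

Lemma efficiency_max_at_copt :
  zMIC < c_opt /\
  forall x, zMIC <= x <= c_opt -> efficiency k r x <= efficiency k r c_opt.
Proof.
set (u1 := zMIC + 1).
assert (Hg1 : 0 < efficiency k r u1).
{ apply (efficiency_pos zMIC); [exact k_incr | lra | exact k_zMIC | unfold u1; lra]. }
destruct (efficiency_eventually_below kmax _ u1 k_lim Hg1) as [M [HuM HgM]].
destruct (continuity_ab_maj (efficiency k r) zMIC M) as [cmax [Hmax [Hlo Hhi]]].
{ unfold u1 in HuM; lra. }
{ intros c Hc; apply continuity_pt_filterlim, continuous_efficiency; [lra |].
  apply k_diff; lra. }
(* The maximiser cmax of g on [zMIC, M] is interior: both endpoint values,
   g(zMIC) = 0 and g(M), lie strictly below g(u1) <= g(cmax). *)
assert (Hu1 : efficiency k r u1 <= efficiency k r cmax) by (apply Hmax; unfold u1 in *; lra).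
assert (Hgz : efficiency k r zMIC = 0).
{ unfold efficiency; rewrite k_zMIC, Rminus_diag; apply Rdiv_0_l. }
assert (Hzc : zMIC < cmax).
{ destruct Hlo as [Hlt | Heq]; [exact Hlt | rewrite <- Heq in Hu1; lra]. }
assert (HcM : cmax < M).
{ destruct Hhi as [Hlt | Heq]; [exact Hlt | rewrite Heq in Hu1; lra]. }
assert (Hcopt : cmax = c_opt).
{ apply c_opt_uniq; [lra |].
  apply (efficiency_interior_max_critical zMIC M); [lra | lra | lra | apply k_diff; lra |].
  intros x Hx; apply Hmax; lra. }
subst cmax; split; [exact Hzc |].
intros x Hx; apply Hmax; lra.
Qed.

Lemma rho_bounds :
  zMIC < c_opt /\ 0 < rho k r zMIC c_opt /\
  rho k r zMIC c_opt <= (c_opt - zMIC) * ((k c_opt - r) / c_opt).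
Proof.
destruct efficiency_max_at_copt as [Hzc Hmax].
assert (Hcont : forall x, zMIC <= x <= c_opt -> continuous (efficiency k r) x).
{ intros x Hx; apply continuous_efficiency; [lra | apply k_diff; lra]. }
split; [exact Hzc | split].
- apply (RInt_gt_0 (efficiency k r)); [exact Hzc | | exact Hcont].
  intros x Hx; apply (efficiency_pos zMIC); [exact k_incr | lra | exact k_zMIC | lra].
- apply (RInt_le_const (efficiency k r)); [lra | exact Hcont | exact Hmax].
Qed.

End Optimum.

End Efficiency.

Lemma tau_div_ln2 (mu : R) : 0 < mu -> tau mu / ln 2 = / mu.
Proof.
intros Hmu.
assert (0 < ln 2) by (rewrite <- ln_1; apply ln_increasing; lra).
unfold tau; field; lra.
Qed.

Lemma T_opt_sub_T_bc (k : R -> R) (r zMIC c mu LR : R) :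
  0 < mu -> k c - r <> 0 ->
  T_opt k r c LR - T_bc_opt k r zMIC c mu LR = / mu * (rho k r zMIC c / (k c - r)).
Proof. intros Hmu HD; unfold T_opt, T_bc_opt; field; lra. Qed.

Lemma AUC_bc_sub_AUC_opt (k : R -> R) (r zMIC c mu LR : R) :
  0 < mu -> k c - r <> 0 ->
  AUC_bc_opt k r zMIC c mu LR - AUC_opt k r c LR
  = / mu * (1 - rho k r zMIC c / (k c - r)) * c.
Proof.
intros Hmu HD; unfold AUC_bc_opt, AUC_opt.
replace ((/ mu + T_bc_opt k r zMIC c mu LR) * c - T_opt k r c LR * c)
  with ((/ mu - (T_opt k r c LR - T_bc_opt k r zMIC c mu LR)) * c) by ring.
rewrite T_opt_sub_T_bc by assumption; ring.
Qed.

Theorem mainTheorem9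
  (k : R -> R) (r kmax zMIC c_opt mu LR : R)
  (Hr : 0 < r)
  (HA1 : assumption_A1 k) (HA2 : assumption_A2 k kmax) (HA3 : assumption_A3 k)
  (Halpha : kmax / r > 1)
  (HzMIC_pos : 0 < zMIC) (HzMIC : k zMIC = r)
  (HzMIC_uniq : forall c, 0 < c -> k c = r -> c = zMIC)
  (Hcopt_pos : 0 < c_opt)
  (Hcopt : Derive k c_opt = (k c_opt - r) / c_opt)
  (Hcopt_uniq : forall c, 0 < c -> Derive k c = (k c - r) / c -> c = c_opt)
  (Hmu : 0 < mu) (HLR : 0 < LR)
  (Hrho : rho k r zMIC c_opt < ln 10 * LR * mu) :
  let Topt := T_opt k r c_opt LR in
  let Tbc := T_bc_opt k r zMIC c_opt mu LR in
  let AUCopt := AUC_opt k r c_opt LR in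
  let AUCbc := AUC_bc_opt k r zMIC c_opt mu LR in
  let rh := rho k r zMIC c_opt in
  Topt - Tbc = tau mu / ln 2 * (rh / (k c_opt - r)) /\
  0 < Topt - Tbc /\
  Topt - Tbc <= tau mu / ln 2 * (1 - zMIC / c_opt) /\
  AUCbc - AUCopt = tau mu / ln 2 * (1 - rh / (k c_opt - r)) * c_opt /\
  tau mu / ln 2 * (1 - rh / (k c_opt - r)) * c_opt >= tau mu / ln 2 * zMIC.
Proof.
destruct HA1 as [_ [_ [_ [Hmono Hder]]]].
destruct (rho_bounds k r kmax zMIC c_opt Hmono (fun c Hc => proj1 (Hder c Hc))
            HA2 HzMIC_pos HzMIC Hcopt_uniq) as [Hzc [Hrho_pos Hrho_le]].
assert (HD : 0 < k c_opt - r) by (pose proof (Hmono zMIC c_opt); lra).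
assert (Hq_pos : 0 < rho k r zMIC c_opt / (k c_opt - r)) by (apply Rdiv_lt_0_compat; lra).
assert (Hq_le : rho k r zMIC c_opt / (k c_opt - r) <= 1 - zMIC / c_opt).
{ apply (Rmult_le_reg_r (k c_opt - r)); [exact HD |].
  replace (rho k r zMIC c_opt / (k c_opt - r) * (k c_opt - r)) with (rho k r zMIC c_opt)
    by (field; lra).
  replace ((1 - zMIC / c_opt) * (k c_opt - r)) with ((c_opt - zMIC) * ((k c_opt - r) / c_opt))
    by (field; lra).
  exact Hrho_le. }
assert (Hinv : 0 < / mu) by (apply Rinv_0_lt_compat; exact Hmu).
intros Topt Tbc AUCopt AUCbc rh.
rewrite tau_div_ln2 by exact Hmu.
unfold Topt, Tbc, AUCopt, AUCbc, rh.
rewrite T_opt_sub_T_bc, AUC_bc_sub_AUC_opt by lra.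
split; [reflexivity |].
split; [apply Rmult_lt_0_compat; lra |].
split; [apply Rmult_le_compat_l; lra |].
split; [reflexivity |].
apply Rle_ge; rewrite Rmult_assoc; apply Rmult_le_compat_l; [lra |].
replace zMIC with (zMIC / c_opt * c_opt) at 1 by (field; lra).
apply Rmult_le_compat_r; lra.
Qed.
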